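(* Let $m,n$ be positive integers. There is an explicit bijection between the set of $m\times n$ partial alternating sign matrices and the set of $(m,n)$-partial height-function matrices.
   Context: An $m\times n$ partial alternating sign matrix is an $m\times n$ matrix with entries in $\{-1,0,1\}$ such that: the entries of each row and of each column sum to $0$ or $1$; the nonzero entries in each row and in each column alternate in sign; in each column the first (topmost) nonzero entry, if any, is $1$, and in each row the last (rightmost) nonzero entry, if any, is $1$. An $(m,n)$-partial height-function matrix is an integer matrix $(h_{i,j})_{0\le i\le m,\,0\le j\le n}$ with all entries nonnegative, $h_{0,k}=k$ for $0\le k\le n$, $h_{\ell,0}=\ell$ for $0\le \ell\le m$, and such that any two horizontally or vertically adjacent entries differ by exactly $1$. *)

From mathcomp Require Import all_boot all_order all_algebra.
Set Implicit Arguments. Unset Strict Implicit. Unset Printing Implicit Defensive.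
Import Order.TTheory GRing.Theory Num.Theory.
Local Open Scope ring_scope.

Definition is_pasm (m n : nat) (A : 'M[int]_(m, n)) : Prop :=
  (forall i j, A i j \in [:: -1; 0; 1]) /\
  (forall i, \sum_j A i j \in [:: 0; 1]) /\
  (forall j, \sum_i A i j \in [:: 0; 1]) /\
  (forall i (j1 j2 : 'I_n), (j1 < j2)%N -> A i j1 != 0 -> A i j2 != 0 ->
     (forall j : 'I_n, (j1 < j)%N -> (j < j2)%N -> A i j = 0) ->
     A i j1 = - A i j2) /\
  (forall j (i1 i2 : 'I_m), (i1 < i2)%N -> A i1 j != 0 -> A i2 j != 0 ->
     (forall i : 'I_m, (i1 < i)%N -> (i < i2)%N -> A i j = 0) ->
     A i1 j = - A i2 j) /\
  (forall i j, A i j != 0 -> (forall i' : 'I_m, (i' < i)%N -> A i' j = 0) ->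
     A i j = 1) /\
  (forall i j, A i j != 0 -> (forall j' : 'I_n, (j < j')%N -> A i j' = 0) ->
     A i j = 1).

Definition is_phf (m n : nat) (h : 'M[int]_(m.+1, n.+1)) : Prop :=
  (forall i j, 0 <= h i j) /\
  (forall k : 'I_n.+1, h ord0 k = (k : nat)%:Z) /\
  (forall l : 'I_m.+1, h l ord0 = (l : nat)%:Z) /\
  (forall (i i' : 'I_m.+1) (j : 'I_n.+1), (i' : nat) = i.+1 ->
     `|h i' j - h i j| = 1) /\
  (forall (i : 'I_m.+1) (j j' : 'I_n.+1), (j' : nat) = j.+1 ->
     `|h i j' - h i j| = 1).

From mathcomp Require Import all_boot all_order all_algebra.
From mathcomp Require Import zify.
From Stdlib Require Import ProofIrrelevance.
Set Implicit Arguments. Unset Strict Implicit. Unset Printing Implicit Defensive.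
Import Order.TTheory GRing.Theory.
Local Open Scope ring_scope.

(* A sequence has all its prefix sums in {0, 1} iff its nonzero entries
   alternate in sign starting with 1.  Hence A is a partial alternating sign
   matrix iff every partial column sum taken from the top and every partial
   row sum taken from the right is 0 or 1.  Let c(i, j) be the sum of the
   top-right i x j corner of A: its increments in both directions are such
   partial sums, so h(i, j) = i + j - 2 c(i, j) has the prescribed boundary
   values and steps of +-1, and c(i, j) <= min(i, j) makes it nonnegative.  Conversely, the partial row sums are read off h
   as the indicators [h(i+1, j) < h(i, j)], and A as their differences. *)

Definition psum N (x : 'I_N -> int) (k : nat) : int := \sum_(j < N | (j < k)%N) x j.

Definition prefix01 N (x : 'I_N -> int) : Prop :=
  forall k, (k <= N)%N -> psum x k \in [:: 0; 1].

Definition sign_alternating N (x : 'I_N -> int) : Prop :=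
  forall j1 j2 : 'I_N, (j1 < j2)%N -> x j1 != 0 -> x j2 != 0 ->
    (forall j : 'I_N, (j1 < j)%N -> (j < j2)%N -> x j = 0) -> x j1 = - x j2.

Definition first_nonzero_one N (x : 'I_N -> int) : Prop :=
  forall j, x j != 0 -> (forall j' : 'I_N, (j' < j)%N -> x j' = 0) -> x j = 1.

Definition last_nonzero_one N (x : 'I_N -> int) : Prop :=
  forall j, x j != 0 -> (forall j' : 'I_N, (j < j')%N -> x j' = 0) -> x j = 1.

Section PartialSums.
Variables (N : nat) (x : 'I_N -> int).

Lemma psum0 : psum x 0 = 0.
Proof. by rewrite /psum big_pred0. Qed.

Lemma psumS (j : 'I_N) : psum x j.+1 = psum x j + x j.
Proof.
rewrite /psum (bigD1 j) //= addrC; congr (_ + _).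
by apply: eq_bigl => k; rewrite ltnS ltn_neqAle andbC.
Qed.

Lemma psum_total : psum x N = \sum_j x j.
Proof. by apply: eq_bigl => j; rewrite ltn_ord. Qed.

Lemma psum_zero_gap k1 k2 : (k1 <= k2)%N ->
  (forall l : 'I_N, (k1 <= l)%N -> (l < k2)%N -> x l = 0) -> psum x k2 = psum x k1.
Proof.
move=> le12 gap; rewrite /psum (bigID (fun j : 'I_N => (j < k1)%N)) /=.
rewrite [X in _ + X]big1 ?addr0 => [|l /andP[lt2 ge1]]; last by rewrite gap // leqNgt.
by apply: eq_bigl => l; apply/idP/idP => [/andP[] | lt1] //; rewrite lt1 (leq_trans lt1).
Qed.

Lemma psum_le_index : (forall j, x j <= 1) -> forall k, psum x k <= k%:Z.
Proof.
move=> le1; elim=> [|k IH]; first by rewrite psum0.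
have [kN | Nk] := ltnP k N.
  by rewrite (psumS (Ordinal kN)) /=; have := le1 (Ordinal kN); lia.
rewrite (@psum_zero_gap k) // => [|l le_kl]; first lia.
by have := ltn_ord l; lia.
Qed.

End PartialSums.

Lemma eq_psum N (x y : 'I_N -> int) : x =1 y -> psum x =1 psum y.
Proof. by move=> e k; apply: eq_bigr. Qed.

Lemma psum_telescope N (f : nat -> int) k : (k <= N)%N ->
  psum (fun j : 'I_N => f j.+1 - f j) k = f k - f 0%N.
Proof.
elim: k => [|k IH] hk; first by rewrite psum0 subrr.
by rewrite (psumS _ (Ordinal hk)) IH ?(ltnW hk) //=; lia.
Qed.

Section Prefix01.
Variables (N : nat) (x : 'I_N -> int).

Lemma prefix01_nonzero : prefix01 x -> forall j, x j != 0 -> x j = 1 - 2 * psum x j.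
Proof.
move=> px j; have := px _ (ltn_ord j); have := px _ (ltnW (ltn_ord j)).
by rewrite psumS !inE; lia.
Qed.

Lemma prefix01_alternating : prefix01 x -> sign_alternating x /\ first_nonzero_one x.
Proof.
move=> px; split=> [j1 j2 lt12 nz1 nz2 gap | j nz gap].
  have gapE : psum x j2 = psum x j1.+1 := psum_zero_gap lt12 gap.
  have := prefix01_nonzero px nz1; have := prefix01_nonzero px nz2.
  by rewrite gapE psumS; lia.
have gapE : psum x j = psum x 0 := psum_zero_gap (leq0n j) (fun l _ => gap l).
by rewrite (prefix01_nonzero px nz) gapE psum0 mulr0 subr0.
Qed.

(* Invariant: after k entries, the next nonzero entry is 1 - 2 (psum x k). *)
Lemma alternating_prefix01 : sign_alternating x -> first_nonzero_one x -> prefix01 x.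
Proof.
move=> alt head1.
suff inv k : (k <= N)%N -> psum x k \in [:: 0; 1] /\
    forall j : 'I_N, (k <= j)%N -> x j != 0 ->
      (forall l : 'I_N, (k <= l)%N -> (l < j)%N -> x l = 0) -> x j = 1 - 2 * psum x k.
  by move=> k /inv[].
elim: k => [|k IH] hk.
  by rewrite psum0 mulr0 subr0; split=> // j _ nz gap; apply: head1 nz (fun l => gap l _).
have [p01 next] := IH (ltnW hk); pose xk := Ordinal hk.
rewrite (psumS x xk) [nat_of_ord xk]/=; have [xk0 | xk_nz] := eqVneq (x xk) 0.
  rewrite xk0 addr0; split=> // j hj nz gap.
  apply: next => [|//|l hl hlj]; first exact: ltnW.
  have [lt_kl | le_lk] := ltnP k l; first exact: gap.
  by rewrite (_ : l = xk) //; apply: val_inj => /=; lia.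
have xkE : x xk = 1 - 2 * psum x k by apply: next => // l kl /= lk; lia.
split; first by move: p01; rewrite xkE !inE; lia.
move=> j hj nz gap; have := alt xk j hj xk_nz nz gap.
by move: p01; rewrite xkE !inE; lia.
Qed.

Lemma prefix01_entry : prefix01 x -> forall j, x j \in [:: -1; 0; 1].
Proof.
move=> px j; have := px _ (ltn_ord j); have := px _ (ltnW (ltn_ord j)).
by rewrite psumS !inE; lia.
Qed.

Lemma prefix01_sum : prefix01 x -> \sum_j x j \in [:: 0; 1].
Proof. by move=> px; rewrite -psum_total; apply: px. Qed.

End Prefix01.

Section Reversal.
Variables (N : nat) (x : 'I_N -> int).

Lemma sign_alternating_rev : sign_alternating (fun j => x (rev_ord j)) <-> sign_alternating x.
Proof.
split=> alt j1 j2 lt12 nz1 nz2 gap; apply/eqP; rewrite -eqr_oppLR eq_sym; apply/eqP.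
  have := alt (rev_ord j2) (rev_ord j1); rewrite !rev_ordK; apply=> //=.
    by have := ltn_ord j2; lia.
  by move=> j lt2 lt1; rewrite gap //=; have := ltn_ord j; lia.
apply: alt => //=; first by have := ltn_ord j2; lia.
by move=> j lt2 lt1; rewrite -[j]rev_ordK gap //=; have := ltn_ord j; lia.
Qed.

Lemma first_nonzero_one_rev : first_nonzero_one (fun j => x (rev_ord j)) <-> last_nonzero_one x.
Proof.
split=> head1 j nz gap.
  have := head1 (rev_ord j); rewrite rev_ordK; apply=> // j' lt.
  by rewrite gap //=; move: lt => /=; have := ltn_ord j'; lia.
apply: head1 => // j' lt; rewrite -[j']rev_ordK gap //=.
by move: lt => /=; have := ltn_ord j; have := ltn_ord j'; lia.
Qed.

End Reversal.

Lemma is_pasmE m n (A : 'M[int]_(m, n)) : is_pasm A <->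
  (forall j, prefix01 (fun i => A i j)) /\ (forall i, prefix01 (fun j => A i (rev_ord j))).
Proof.
split.
  case=> _ [_ [_ [row_alt [col_alt [col_first row_last]]]]]; split=> [j | i].
    exact: alternating_prefix01 (col_alt j) (col_first^~ j).
  apply: alternating_prefix01.
    exact/sign_alternating_rev/row_alt.
  exact/first_nonzero_one_rev/row_last.
move=> [col01 row01].
have col_alt j := (prefix01_alternating (col01 j)).1.
have col_first j := (prefix01_alternating (col01 j)).2.
have row_alt i := (prefix01_alternating (row01 i)).1.
have row_first i := (prefix01_alternating (row01 i)).2.
split; first by move=> i j; exact: prefix01_entry (col01 j) i.
split; first by move=> i; rewrite (reindex_inj rev_ord_inj); exact: prefix01_sum (row01 i).
split; first by move=> j; exact: prefix01_sum (col01 j).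
split; first by move=> i; exact/sign_alternating_rev/row_alt.
split; first exact: col_alt.
split; first by move=> i j; exact: col_first.
by move=> i; exact/first_nonzero_one_rev/row_first.
Qed.

Section HeightOfPasm.
Variables (m n : nat) (A : 'M[int]_(m, n)).

Definition row_tail_sum (i : 'I_m) k := psum (fun j => A i (rev_ord j)) k.
Definition col_head_sum (j : 'I_n) k := psum (fun i => A i j) k.
Definition corner_sum i j := psum (fun i' => row_tail_sum i' j) i.

Lemma corner_sum_exchange i j :
  corner_sum i j = psum (fun j' => col_head_sum (rev_ord j') i) j.
Proof. exact: exchange_big. Qed.

Definition height_of_pasm : 'M[int]_(m.+1, n.+1) :=
  \matrix_(i, j) ((i : nat)%:Z + (j : nat)%:Z - 2 * corner_sum i j).

Hypothesis pasmA : is_pasm A.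
Let col01 := ((is_pasmE A).1 pasmA).1.
Let row01 := ((is_pasmE A).1 pasmA).2.

Lemma height_of_pasm_phf : is_phf height_of_pasm.
Proof.
have le1 (z : int) : z \in [:: 0; 1] -> z <= 1 by rewrite !inE; lia.
split.
  move=> i j; rewrite mxE.
  have le_i : corner_sum i j <= i%:Z.
    exact: psum_le_index (fun i' => le1 _ (row01 i' (ltn_ord j))) i.
  have le_j : corner_sum i j <= j%:Z.
    rewrite corner_sum_exchange.
    exact: psum_le_index (fun j' => le1 _ (col01 (rev_ord j') (ltn_ord i))) j.
  lia.
split; first by move=> k; rewrite mxE /corner_sum psum0 /=; lia.
split; first by move=> l; rewrite mxE corner_sum_exchange psum0 /=; lia.
split=> [i i' j e|i j j' e]; rewrite !mxE e.
  have lt_im : (i < m)%N by have := ltn_ord i'; lia.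
  rewrite /corner_sum (psumS _ (Ordinal lt_im)) /=.
  have : row_tail_sum (Ordinal lt_im) j \in [:: 0; 1] := row01 _ (ltn_ord j).
  by rewrite !inE => /orP[] /eqP ->; lia.
have lt_jn : (j < n)%N by have := ltn_ord j'; lia.
rewrite !corner_sum_exchange (psumS _ (Ordinal lt_jn)) /=.
have : col_head_sum (rev_ord (Ordinal lt_jn)) i \in [:: 0; 1] := col01 _ (ltn_ord i).
by rewrite !inE => /orP[] /eqP ->; lia.
Qed.

End HeightOfPasm.

Definition descent (x y : int) : int := ((y < x)%R : nat)%:Z.

Lemma descent_step (x y : int) : `|y - x| = 1 -> 2 * descent x y = x - y + 1.
Proof. by rewrite /descent; case: ltP; lia. Qed.

Lemma descent01 (x y : int) : descent x y \in [:: 0; 1].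
Proof. by rewrite /descent; case: (y < x). Qed.

Section PasmOfHeight.
Variables (m n : nat) (h : 'M[int]_(m.+1, n.+1)).

(* Out-of-range indices are sent to 0 by [inord]. *)
Definition hgt i j := h (inord i) (inord j).
Definition vdescent i j := descent (hgt i j) (hgt i.+1 j).
Definition hdescent i j := descent (hgt i j) (hgt i j.+1).

Definition pasm_of_height : 'M[int]_(m, n) :=
  \matrix_(i, j) (vdescent i (rev_ord j).+1 - vdescent i (rev_ord j)).

Lemma hgt_ord (i : 'I_m.+1) (j : 'I_n.+1) : h i j = hgt i j.
Proof. by rewrite /hgt !inord_val. Qed.

Hypothesis phf_h : is_phf h.

Lemma hgt_top j : (j <= n)%N -> hgt 0 j = j%:Z.
Proof.
case: phf_h => _ [top _] le_jn.
by rewrite /hgt (inord_val (@ord0 m) : inord 0 = ord0) top inordK.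
Qed.

Lemma hgt_left i : (i <= m)%N -> hgt i 0 = i%:Z.
Proof.
case: phf_h => _ [_ [left _]] le_im.
by rewrite /hgt (inord_val (@ord0 n) : inord 0 = ord0) left inordK.
Qed.

Lemma hgt_vstep i j : (i < m)%N -> (j <= n)%N -> `|hgt i.+1 j - hgt i j| = 1.
Proof.
case: phf_h => _ [_ [_ [vstep _]]] lt_im le_jn.
by apply: vstep; rewrite !inordK //; lia.
Qed.

Lemma hgt_hstep i j : (i <= m)%N -> (j < n)%N -> `|hgt i j.+1 - hgt i j| = 1.
Proof.
case: phf_h => _ [_ [_ [_ hstep]]] le_im lt_jn.
by apply: hstep; rewrite !inordK //; lia.
Qed.

Lemma vdescent_left i : (i < m)%N -> vdescent i 0 = 0.
Proof.
move=> lt_im; have := hgt_left lt_im; have := hgt_left (ltnW lt_im).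
by rewrite /vdescent /descent; case: ltP => //; lia.
Qed.

Lemma hdescent_top j : (j < n)%N -> hdescent 0 j = 0.
Proof.
move=> lt_jn; have := hgt_top lt_jn; have := hgt_top (ltnW lt_jn).
by rewrite /hdescent /descent; case: ltP => //; lia.
Qed.

Lemma descent_square i j : (i < m)%N -> (j < n)%N ->
  vdescent i j.+1 - vdescent i j = hdescent i.+1 j - hdescent i j.
Proof.
move=> lt_im lt_jn.
have := descent_step (hgt_vstep lt_im (ltnW lt_jn)).
have := descent_step (hgt_vstep lt_im lt_jn).
have := descent_step (hgt_hstep (ltnW lt_im) lt_jn).
have := descent_step (hgt_hstep lt_im lt_jn).
by rewrite /vdescent /hdescent; lia.
Qed.

Lemma pasm_of_height_row (i : 'I_m) k : (k <= n)%N ->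
  psum (fun j => pasm_of_height i (rev_ord j)) k = vdescent i k.
Proof.
move=> le_kn; rewrite (@eq_psum _ _ (fun j : 'I_n => vdescent i j.+1 - vdescent i j)).
  by rewrite (psum_telescope (vdescent i)) // vdescent_left ?subr0.
by move=> j; rewrite mxE rev_ordK.
Qed.

Lemma pasm_of_height_col (j : 'I_n) k : (k <= m)%N ->
  psum (fun i => pasm_of_height i j) k = hdescent k (rev_ord j).
Proof.
move=> le_km.
rewrite (@eq_psum _ _ (fun i : 'I_m => hdescent i.+1 (rev_ord j) - hdescent i (rev_ord j))).
  by rewrite (psum_telescope (hdescent^~ (rev_ord j))) // hdescent_top ?subr0.
by move=> i; rewrite mxE descent_square.
Qed.

Lemma pasm_of_height_pasm : is_pasm pasm_of_height.
Proof.
apply/is_pasmE; split=> [j k le_km | i k le_kn].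
  by rewrite pasm_of_height_col ?descent01.
by rewrite pasm_of_height_row ?descent01.
Qed.

Lemma hgt_vdescent_sum i j : (i <= m)%N -> (j <= n)%N ->
  hgt i j = i%:Z + j%:Z - 2 * psum (fun i' : 'I_m => vdescent i' j) i.
Proof.
move=> + le_jn; elim: i => [|i IH] le_im; first by rewrite psum0 hgt_top //; lia.
rewrite (psumS _ (Ordinal le_im)) /=.
have := descent_step (hgt_vstep le_im le_jn); have := IH (ltnW le_im).
by rewrite /vdescent; lia.
Qed.

Lemma height_of_pasmK : height_of_pasm pasm_of_height = h.
Proof.
apply/matrixP => i j; rewrite mxE hgt_ord (hgt_vdescent_sum (ltn_ord i) (ltn_ord j)).
by congr (_ - 2 * _); apply: eq_psum => i'; exact: pasm_of_height_row (ltn_ord j).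
Qed.

End PasmOfHeight.

Lemma vdescent_height_of_pasm m n (A : 'M[int]_(m, n)) (i : 'I_m) k : is_pasm A ->
  (k <= n)%N -> vdescent (height_of_pasm A) i k = row_tail_sum A i k.
Proof.
move=> pasmA le_kn; have [_ row01] := (is_pasmE A).1 pasmA.
have lt_im := ltn_ord i; rewrite /vdescent /descent /hgt !mxE !inordK; try lia.
rewrite /corner_sum (psumS _ i).
have : row_tail_sum A i k \in [:: 0; 1] := row01 i k le_kn.
by rewrite !inE => /orP[] /eqP ->; case: ltP; lia.
Qed.

Lemma pasm_of_heightK m n (A : 'M[int]_(m, n)) :
  is_pasm A -> pasm_of_height (height_of_pasm A) = A.
Proof.
move=> pasmA; apply/matrixP => i j.
rewrite mxE !vdescent_height_of_pasm //; last exact: ltnW.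
by rewrite /row_tail_sum psumS rev_ordK addrC addKr.
Qed.

Lemma sval_inj T (P : T -> Prop) : injective (@sval T P).
Proof. exact: eq_sig_hprop (fun x => @proof_irrelevance (P x)). Qed.

Theorem lemma3p10 (m n : nat) (hm : (0 < m)%N) (hn : (0 < n)%N) :
  exists f : {A : 'M[int]_(m, n) | is_pasm A} ->
             {h : 'M[int]_(m.+1, n.+1) | is_phf h},
    bijective f.
Proof.
exists (fun A => exist _ (height_of_pasm (sval A)) (height_of_pasm_phf (svalP A))).
exists (fun h => exist _ (pasm_of_height (sval h)) (pasm_of_height_pasm (svalP h))).
  by move=> A; apply: sval_inj; exact: pasm_of_heightK (svalP A).
by move=> h; apply: sval_inj; exact: height_of_pasmK (svalP h).
Qed.
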